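(* Let $\varphi,\phi$ be GFG-QPTL formulas. Then $\varphi$ is $\exists\forall$-satisfiable iff $\varphi$ is $\forall\exists$-satisfiable. Moreover, $\varphi\Rightarrow^{\exists\forall}\phi$ iff $\varphi\Rightarrow^{\forall\exists}\phi$, and $\varphi\equiv^{\exists\forall}\phi$ iff $\varphi\equiv^{\forall\exists}\phi$.
   Context: Let $AP$ be a set of atomic propositions and $\mathbb B=\{\top,\bot\}$. A temporal valuation is a function $f:\mathbb N\to\mathbb B$. An assignment is a partial function $\chi:AP\rightharpoonup(\mathbb N\to\mathbb B)$; $\mathrm{Asg}$ is the set of all assignments, $\mathrm{Asg}(P)$ the set of assignments with domain exactly $P\subseteq AP$. For an assignment $\chi$, $p\in AP$ and a temporal valuation $f$, $\chi[p\mapsto f]$ is the assignment that agrees with $\chi$ except that it maps $p$ to $f$. A hyperassignment is a set $\mathcal X$ with $\emptyset\neq\mathcal X\subseteq 2^{\mathrm{Asg}(P)}$ and $\emptyset\notin\mathcal X$, for some $P\subseteq AP$; this $P$ is denoted $\mathrm{ap}(\mathcal X)$. $\mathrm{HAsg}$ is the set of all hyperassignments, $\mathrm{HAsg}(P)$ those with $\mathrm{ap}(\mathcal X)=P$, and $\mathrm{HAsg}_\supseteq(P)$ those with $\mathrm{ap}(\mathcal X)\supseteq P$. A choice function for $\mathcal X$ is a map $c:\mathcal X\to\mathrm{Asg}$ with $c(X)\in X$ for all $X\in\mathcal X$. The dual of $\mathcal X$ is $\overline{\mathcal X}=\{\mathrm{img}(c): c\text{ a choice function for }\mathcal X\}$.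 $\mathrm{par}(\mathcal X)$ is the set of pairs $(\mathcal X_1,\mathcal X_2)$ of (possibly empty) subsets of $\mathcal X$ with $\mathcal X_1\cap\mathcal X_2=\emptyset$ and $\mathcal X_1\cup\mathcal X_2=\mathcal X$. A functor over $P\subseteq AP$ is a function $F:\mathrm{Asg}(P)\to(\mathbb N\to\mathbb B)$; $\mathrm{Fnc}(P)$ is the set of all of them. $\mathrm{ext}(\chi,F,p)=\chi[p\mapsto F(\chi)]$ and $\mathrm{ext}(X,F,p)=\{\mathrm{ext}(\chi,F,p):\chi\in X\}$. For $\chi_1,\chi_2\in\mathrm{Asg}(P)$, $p\in P$, $k\in\mathbb N$: $\chi_1\approx^{>k}_p\chi_2$ iff $\chi_1(q)=\chi_2(q)$ for all $q\in P\setminus\{p\}$ and $\chi_1(p)(t)=\chi_2(p)(t)$ for all $t\le k$; $\chi_1\approx^{\ge k}_p\chi_2$ is defined the same way with $t<k$ in place of $t\le k$. $F\in\mathrm{Fnc}(P)$ is behavioral (resp. strongly behavioral) w.r.t. $p\in P$ if $F(\chi_1)(k)=F(\chi_2)(k)$ for all $k\in\mathbb N$ and all $\chi_1,\chi_2$ with $\chi_1\approx^{>k}_p\chi_2$ (resp. $\chi_1\approx^{\ge k}_p\chi_2$). A quantifier specification is a pair $\sigma=\langle P_B,P_S\rangle$ of subsets of $AP$; $\mathrm{Fnc}_\sigma(P)$ is the set of $F\in\mathrm{Fnc}(P)$ that are behavioral w.r.t. every $p\in P_B\cap P$ and strongly behavioral w.r.t. every $p\in P_S\cap P$. $\mathrm{ext}_\sigma(\mathcal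 X,p)=\{\mathrm{ext}(X,F,p):X\in\mathcal X,\ F\in\mathrm{Fnc}_\sigma(\mathrm{ap}(\mathcal X))\}$. GFG-QPTL formulas are generated by $\varphi::=\psi\mid\neg\varphi\mid\varphi\wedge\varphi\mid\varphi\vee\varphi\mid\exists p{:}\sigma.\varphi\mid\forall p{:}\sigma.\varphi$, where $\psi$ is an LTL formula over $AP$, $p\in AP$ and $\sigma$ a quantifier specification; we also write $\exists^\sigma p.\varphi$, $\forall^\sigma p.\varphi$. QPTL formulas are those in which every specification is $\langle\emptyset,\emptyset\rangle$. $\mathrm{free}(\varphi)$ is the set of free propositions. $\chi\models_{LTL}\psi$ iff the infinite word whose $t$-th letter is the valuation $q\mapsto\chi(q)(t)$ satisfies $\psi$ in the standard LTL sense. Alternation flags are $\exists\forall$ and $\forall\exists$; $\bar\alpha$ is the flag different from $\alpha$. For a GFG-QPTL formula $\varphi$, $\mathcal X\in\mathrm{HAsg}_\supseteq(\mathrm{free}(\varphi))$ and flag $\alpha$, $\mathcal X\models^\alpha\varphi$ is defined inductively: (1) for LTL $\psi$: $\mathcal X\models^{\exists\forall}\psi$ iff there is $X\in\mathcal X$ with $\chi\models_{LTL}\psi$ for all $\chi\in X$; $\mathcal X\models^{\forall\exists}\psi$ iff for every $X\in\mathcal X$ there is $\chi\in X$ with $\chi\models_{LTL}\psi$; (2) $\mathcal X\models^\alpha\neg\phi$ iff not $\mathcal X\models^{\bar\alpha}\phi$; (3) $\mathcal X\models^{\exists\forall}\phi_1\wedge\phi_2$ iff for every $(\mathcal X_1,\mathcal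 X_2)\in\mathrm{par}(\mathcal X)$, either ($\mathcal X_1\ne\emptyset$ and $\mathcal X_1\models^{\exists\forall}\phi_1$) or ($\mathcal X_2\ne\emptyset$ and $\mathcal X_2\models^{\exists\forall}\phi_2$); $\mathcal X\models^{\forall\exists}\phi_1\wedge\phi_2$ iff $\overline{\mathcal X}\models^{\exists\forall}\phi_1\wedge\phi_2$; (4) $\mathcal X\models^{\forall\exists}\phi_1\vee\phi_2$ iff there is $(\mathcal X_1,\mathcal X_2)\in\mathrm{par}(\mathcal X)$ such that ($\mathcal X_1\neq\emptyset$ implies $\mathcal X_1\models^{\forall\exists}\phi_1$) and ($\mathcal X_2\neq\emptyset$ implies $\mathcal X_2\models^{\forall\exists}\phi_2$); $\mathcal X\models^{\exists\forall}\phi_1\vee\phi_2$ iff $\overline{\mathcal X}\models^{\forall\exists}\phi_1\vee\phi_2$; (5) $\mathcal X\models^{\exists\forall}\exists p{:}\sigma.\phi$ iff $\mathrm{ext}_\sigma(\mathcal X,p)\models^{\exists\forall}\phi$; $\mathcal X\models^{\forall\exists}\exists p{:}\sigma.\phi$ iff $\overline{\mathcal X}\models^{\exists\forall}\exists p{:}\sigma.\phi$; (6) $\mathcal X\models^{\forall\exists}\forall p{:}\sigma.\phi$ iff $\mathrm{ext}_\sigma(\mathcal X,p)\models^{\forall\exists}\phi$; $\mathcal X\models^{\exists\forall}\forall p{:}\sigma.\phi$ iff $\overline{\mathcal X}\models^{\forall\exists}\forall p{:}\sigma.\phi$. A GFG-QPTL formula $\varphi$ is $\alpha$-satisfiable if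 $\mathcal X\models^\alpha\varphi$ for some $\mathcal X\in\mathrm{HAsg}(\mathrm{free}(\varphi))$. $\varphi\Rightarrow^\alpha\phi$ ($\alpha$-implication) holds iff $\mathrm{free}(\varphi)=\mathrm{free}(\phi)$ and for all $\mathcal X\in\mathrm{HAsg}_\supseteq(\mathrm{free}(\varphi))$, $\mathcal X\models^\alpha\varphi$ implies $\mathcal X\models^\alpha\phi$; $\varphi\equiv^\alpha\phi$ ($\alpha$-equivalence) holds iff $\mathrm{free}(\varphi)=\mathrm{free}(\phi)$ and for all such $\mathcal X$, $\mathcal X\models^\alpha\varphi$ iff $\mathcal X\models^\alpha\phi$. *)

From Stdlib Require Import Arith ClassicalEpsilon.

Set Implicit Arguments.

Section GFG.
Variable AP : Type.

Definition tval := nat -> bool.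
Definition asg := AP -> option tval.
Definition aset := asg -> Prop.
Definition hset := aset -> Prop.

(* value of proposition q at time t (false outside the domain) *)
Definition val (chi : asg) (q : AP) (t : nat) : bool :=
  match chi q with Some f => f t | None => false end.

Definition inAsg (P : AP -> Prop) (chi : asg) : Prop :=
  forall q, P q <-> chi q <> None.

Definition upd (chi : asg) (p : AP) (f : tval) : asg :=
  fun q => if excluded_middle_informative (q = p) then Some f else chi q.

Definition isHAsg (P : AP -> Prop) (XX : hset) : Prop :=
  (exists X, XX X) /\
  (forall X, XX X -> exists chi, X chi) /\
  (forall X, XX X -> forall chi, X chi -> inAsg P chi).

Definition isHAsg_sup (P : AP -> Prop) (XX : hset) : Prop :=
  exists Q, (forall q, P q -> Q q) /\ isHAsg Q XX.

(* ap(XX), computed intrinsically (equals P for XX in HAsg(P)) *)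
Definition ap (XX : hset) : AP -> Prop :=
  fun q => exists X chi, XX X /\ X chi /\ chi q <> None.

Definition choice_fun (XX : hset) (c : aset -> asg) : Prop :=
  forall X, XX X -> X (c X).
Definition dual (XX : hset) : hset :=
  fun Y => exists c, choice_fun XX c /\
    (forall chi, Y chi <-> exists X, XX X /\ c X = chi).

Definition par (XX XX1 XX2 : hset) : Prop :=
  forall X, (XX X <-> (XX1 X \/ XX2 X)) /\ ~ (XX1 X /\ XX2 X).

Definition nonempty (XX : hset) : Prop := exists X, XX X.

Definition fnc := asg -> tval.   (* only its values on Asg(P) matter *)

Record qspec := QSpec { PB : AP -> Prop; PS : AP -> Prop }.

(* chi1 ~^{>k}_p chi2 (strict = false) and chi1 ~^{>=k}_p chi2 (strict = true) *)
Definition approx (P : AP -> Prop) (strict : bool) (p : AP) (k : nat)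
  (chi1 chi2 : asg) : Prop :=
  (forall q, P q -> q <> p -> forall t, val chi1 q t = val chi2 q t) /\
  (forall t, (if strict then t < k else t <= k) -> val chi1 p t = val chi2 p t).

Definition behavioral_gen (P : AP -> Prop) (strict : bool) (F : fnc) (p : AP) :=
  forall k chi1 chi2, inAsg P chi1 -> inAsg P chi2 ->
    approx P strict p k chi1 chi2 -> F chi1 k = F chi2 k.

Definition behavioral P F p := behavioral_gen P false F p.
Definition strongly_behavioral P F p := behavioral_gen P true F p.

Definition fnc_sigma (sigma : qspec) (P : AP -> Prop) (F : fnc) : Prop :=
  (forall p, PB sigma p -> P p -> behavioral P F p) /\
  (forall p, PS sigma p -> P p -> strongly_behavioral P F p).

Definition ext_set (X : aset) (F : fnc) (p : AP) : aset :=
  fun chi' => exists chi, X chi /\ chi' = upd chi p (F chi).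

Definition ext_sigma (sigma : qspec) (XX : hset) (p : AP) : hset :=
  fun Y => exists X F, XX X /\ fnc_sigma sigma (ap XX) F /\
    (forall chi, Y chi <-> ext_set X F p chi).

Inductive ltl : Type :=
| LTrue : ltl
| LAtom : AP -> ltl
| LNot : ltl -> ltl
| LAnd : ltl -> ltl -> ltl
| LOr : ltl -> ltl -> ltl
| LNext : ltl -> ltl
| LUntil : ltl -> ltl -> ltl.

Fixpoint ltl_sat (w : nat -> AP -> bool) (i : nat) (psi : ltl) : Prop :=
  match psi with
  | LTrue => True
  | LAtom q => w i q = true
  | LNot a => ~ ltl_sat w i a
  | LAnd a b => ltl_sat w i a /\ ltl_sat w i b
  | LOr a b => ltl_sat w i a \/ ltl_sat w i b
  | LNext a => ltl_sat w (S i) a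
  | LUntil a b => exists j, i <= j /\ ltl_sat w j b /\
                   (forall k, i <= k -> k < j -> ltl_sat w k a)
  end.

Definition word_of (chi : asg) : nat -> AP -> bool := fun t q => val chi q t.

Definition models_ltl (chi : asg) (psi : ltl) : Prop := ltl_sat (word_of chi) 0 psi.

Fixpoint ltl_atoms (psi : ltl) : AP -> Prop :=
  match psi with
  | LTrue => fun _ => False
  | LAtom q => fun r => r = q
  | LNot a | LNext a => ltl_atoms a
  | LAnd a b | LOr a b | LUntil a b => fun r => ltl_atoms a r \/ ltl_atoms b r
  end.

Inductive gfg : Type :=
| GLtl : ltl -> gfg
| GNot : gfg -> gfg
| GAnd : gfg -> gfg -> gfg
| GOr : gfg -> gfg -> gfg
| GEx : AP -> qspec -> gfg -> gfg
| GAll : AP -> qspec -> gfg -> gfg.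

Definition is_QPTL_spec (s : qspec) := forall q, ~ PB s q /\ ~ PS s q.

Fixpoint free (phi : gfg) : AP -> Prop :=
  match phi with
  | GLtl psi => ltl_atoms psi
  | GNot a => free a
  | GAnd a b | GOr a b => fun r => free a r \/ free b r
  | GEx p _ a | GAll p _ a => fun r => free a r /\ r <> p
  end.

Inductive flag := EA | AE.

Definition flip (a : flag) : flag := match a with EA => AE | AE => EA end.

Fixpoint sem (phi : gfg) (a : flag) (XX : hset) {struct phi} : Prop :=
  match phi with
  | GLtl psi =>
      match a with
      | EA => exists X, XX X /\ forall chi, X chi -> models_ltl chi psi
      | AE => forall X, XX X -> exists chi, X chi /\ models_ltl chi psi
      end
  | GNot b => ~ sem b (flip a) XX
  | GAnd b c =>
      let andEA := fun YY : hset => forall YY1 YY2, par YY YY1 YY2 ->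
            (nonempty YY1 /\ sem b EA YY1) \/ (nonempty YY2 /\ sem c EA YY2) in
      match a with EA => andEA XX | AE => andEA (dual XX) end
  | GOr b c =>
      let orAE := fun YY : hset => exists YY1 YY2, par YY YY1 YY2 /\
            (nonempty YY1 -> sem b AE YY1) /\ (nonempty YY2 -> sem c AE YY2) in
      match a with AE => orAE XX | EA => orAE (dual XX) end
  | GEx p s b =>
      match a with
      | EA => sem b EA (ext_sigma s XX p)
      | AE => sem b EA (ext_sigma s (dual XX) p)
      end
  | GAll p s b =>
      match a with
      | AE => sem b AE (ext_sigma s XX p)
      | EA => sem b AE (ext_sigma s (dual XX) p)
      end
  end.

Definition satisfiable (a : flag) (phi : gfg) : Prop :=
  exists XX, isHAsg (free phi) XX /\ sem phi a XX.

Definition same_free (phi psi : gfg) : Prop := forall q, free phi q <-> free psi q.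

Definition implies (a : flag) (phi psi : gfg) : Prop :=
  same_free phi psi /\
  forall XX, isHAsg_sup (free phi) XX -> sem phi a XX -> sem psi a XX.

Definition equivalent (a : flag) (phi psi : gfg) : Prop :=
  same_free phi psi /\
  forall XX, isHAsg_sup (free phi) XX -> (sem phi a XX <-> sem psi a XX).

End GFG.

From Stdlib Require Import Classical ClassicalEpsilon FunctionalExtensionality PropExtensionality.

Set Implicit Arguments.
Unset Strict Implicit.

(* Order hyperassignments by refinement: XX refines YY when every
   member of YY contains a member of XX.  Dualisation reverses refinement, and
   the double dual of XX refines XX and is refined by it.  By induction on
   formulas, the exists-forall semantics is antitone and the forall-exists
   semantics is monotone in this order (among hyperassignments over a common
   set of propositions); hence both are invariant under double dualisation.
   Duality follows: XX |=EA phi iff dual XX |=AE phi, and symmetrically.  For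
   LTL formulas this is the fact that "some member is entirely good" for XX is
   "every member has a good element" for the dual; for negations it follows
   from the induction hypothesis; for all other connectives the AE clause is by
   definition the EA clause on the dual, so only double-dual invariance is
   needed.  Since dualisation preserves (super-)hyperassignments, satisfaction,
   implication and equivalence transfer between the two flags. *)

Lemma choose_witnesses {A B : Type} (b0 : B) (R : A -> B -> Prop) :
  exists f : A -> B, forall a, (exists b, R a b) -> R a (f a).
Proof. exists (fun a => epsilon (inhabits b0) (R a)). intro a. apply epsilon_spec. Qed.

Section Duality.
Variable AP : Type.
Implicit Types (P : AP -> Prop) (XX YY : hset AP).

Definition refines XX YY : Prop :=
  forall Y, YY Y -> exists X, XX X /\ forall chi, X chi -> Y chi.

Definition uniform P XX : Prop :=
  forall X, XX X -> forall chi, X chi -> inAsg P chi.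

Definition no_asg : asg AP := fun _ => None.

Lemma dual_antitone XX YY : refines XX YY -> refines (dual YY) (dual XX).
Proof.
  intros Href Z [c [Hc HZ]].
  destruct (choose_witnesses (fun _ : asg AP => False)
     (fun (Y X : aset AP) => XX X /\ forall chi, X chi -> Y chi)) as [f Hf].
  exists (fun chi => exists Y, YY Y /\ c (f Y) = chi). split.
  - exists (fun Y => c (f Y)). split; [|tauto].
    intros Y HY. destruct (Hf Y (Href Y HY)) as [HfY Hsub]. apply Hsub, Hc, HfY.
  - intros chi [Y [HY <-]]. apply HZ. exists (f Y). split; [|reflexivity].
    apply (Hf Y (Href Y HY)).
Qed.

(* Every X in XX contains the member of the double dual choosing along X. *)
Lemma dual_dual_refines XX : refines (dual (dual XX)) XX.
Proof.
  intros X HX.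
  destruct (choose_witnesses (fun _ : aset AP => no_asg)
     (fun (Y : aset AP) c => choice_fun XX c /\
        forall chi, Y chi <-> exists X, XX X /\ c X = chi)) as [g Hg].
  exists (fun chi => exists Y, dual XX Y /\ g Y X = chi). split.
  - exists (fun Y => g Y X). split; [|tauto].
    intros Y HY. apply (proj2 (Hg Y HY)). exists X; split; auto.
  - intros chi [Y [HY <-]]. apply (proj1 (Hg Y HY)), HX.
Qed.

(* Conversely, a member Z of the double dual contains some X in XX: otherwise
   choosing an element outside Z in every X yields a member of the dual
   that Z misses. *)
Lemma refines_dual_dual XX : refines XX (dual (dual XX)).
Proof.
  intros Z [d [Hd HZ]]. apply NNPP; intro Hnone.
  assert (Hout : forall X, XX X -> exists chi, X chi /\ ~ Z chi).
  { intros X HX. apply NNPP; intro Hin. apply Hnone. exists X. split; auto.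
    intros chi Hchi. apply NNPP; intro HnZ. apply Hin. exists chi; auto. }
  destruct (choose_witnesses no_asg (fun (X : aset AP) chi => X chi /\ ~ Z chi))
    as [c Hc].
  set (Y := fun chi => exists X, XX X /\ c X = chi).
  assert (HY : dual XX Y).
  { exists c. split; [|unfold Y; tauto]. intros X HX. apply (Hc X (Hout X HX)). }
  destruct (Hd Y HY) as [X [HX Hdc]].
  apply (proj2 (Hc X (Hout X HX))). rewrite Hdc. apply HZ. exists Y; auto.
Qed.

Lemma uniform_dual P XX : uniform P XX -> uniform P (dual XX).
Proof.
  intros HU Y [c [Hc HY]] chi Hchi. apply HY in Hchi as [X [HX <-]].
  apply (HU X HX), Hc, HX.
Qed.

Lemma uniform_par P XX XX1 XX2 :
  uniform P XX -> par XX XX1 XX2 -> uniform P XX1 /\ uniform P XX2.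
Proof. intros HU Hp. split; intros X HX; apply HU, (Hp X); auto. Qed.

Lemma par_refines XX YY XX1 XX2 : refines XX YY -> par XX XX1 XX2 ->
  exists YY1 YY2, par YY YY1 YY2 /\ refines XX1 YY1 /\ refines XX2 YY2.
Proof.
  intros Href Hp.
  set (covered := fun Y : aset AP => exists X, XX1 X /\ forall chi, X chi -> Y chi).
  exists (fun Y => YY Y /\ covered Y), (fun Y => YY Y /\ ~ covered Y).
  split; [|split].
  - intros Y. split; [|tauto]. split; [|tauto].
    intro HY. destruct (classic (covered Y)); tauto.
  - intros Y [_ HY]. exact HY.
  - intros Y [HY Hn]. destruct (Href Y HY) as [X [HX Hsub]].
    exists X. split; auto. destruct (proj1 (proj1 (Hp X)) HX) as [H1|H2]; auto.
    exfalso. apply Hn. exists X; auto.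
Qed.

Lemma refines_nonempty XX YY : refines XX YY -> nonempty YY -> nonempty XX.
Proof. intros Href [Y HY]. destruct (Href Y HY) as [X [HX _]]. exists X; auto. Qed.

Lemma fnc_sigma_const s P : fnc_sigma s P (fun _ _ => false).
Proof. split; intros p _ _ k chi1 chi2 _ _ _; reflexivity. Qed.

Lemma fnc_sigma_iff s P Q F :
  (forall q, P q <-> Q q) -> fnc_sigma s P F -> fnc_sigma s Q F.
Proof.
  intros HPQ. replace Q with P; auto.
  apply functional_extensionality; intro q; apply propositional_extensionality; auto.
Qed.

Lemma ap_uniform P XX X chi : uniform P XX -> XX X -> X chi ->
  forall q, ap XX q <-> P q.
Proof.
  intros HU HX Hchi q. split.
  - intros [X' [chi' [HX' [Hchi' Hq]]]]. apply (HU X' HX' chi' Hchi'). exact Hq.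
  - intros Hq. exists X, chi. repeat split; auto. apply (HU X HX chi Hchi). exact Hq.
Qed.

(* Extension preserves refinement: an admissible functor for a member of YY is
   also admissible for the member of XX inside it (both have the same
   propositions), and an empty member is extended by the constant functor. *)
Lemma ext_sigma_refines P s p XX YY : uniform P XX -> uniform P YY ->
  refines XX YY -> refines (ext_sigma s XX p) (ext_sigma s YY p).
Proof.
  intros HUX HUY Href W [Y [F [HY [HF HW]]]].
  destruct (Href Y HY) as [X [HX Hsub]].
  destruct (classic (exists chi, X chi)) as [[chi0 Hchi0]|Hempty].
  - exists (ext_set X F p). split.
    + exists X, F. split; [exact HX|split; [|tauto]].
      apply (fnc_sigma_iff (P := ap YY)); auto. intro q.
      rewrite (ap_uniform HUY HY (Hsub _ Hchi0)), (ap_uniform HUX HX Hchi0). tauto.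
    + intros chi [chi' [Hchi' ->]]. apply HW. exists chi'; auto.
  - exists (ext_set X (fun _ _ => false) p). split.
    + exists X, (fun _ _ => false). split; [exact HX|split; [apply fnc_sigma_const|tauto]].
    + intros chi [chi' [Hchi' _]]. exfalso. eauto.
Qed.

Lemma uniform_ext_sigma P s p XX : uniform P XX ->
  uniform (fun q => P q \/ q = p) (ext_sigma s XX p).
Proof.
  intros HU W [X [F [HX [_ HW]]]] chi Hchi. apply HW in Hchi as [chi' [Hchi' ->]].
  intro q. unfold upd. destruct (excluded_middle_informative (q = p)) as [e|e].
  - split; [discriminate|auto].
  - rewrite <- (HU X HX chi' Hchi' q). tauto.
Qed.

Definition monotone (S : hset AP -> Prop) : Prop :=
  forall P XX YY, uniform P XX -> uniform P YY -> refines XX YY -> S XX -> S YY.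

Definition antitone (S : hset AP -> Prop) : Prop :=
  forall P XX YY, uniform P XX -> uniform P YY -> refines XX YY -> S YY -> S XX.

Lemma antitone_not S : monotone S -> antitone (fun XX => ~ S XX).
Proof. intros HS P XX YY HUX HUY Href Hn HX. exact (Hn (HS P XX YY HUX HUY Href HX)). Qed.

Lemma monotone_not S : antitone S -> monotone (fun XX => ~ S XX).
Proof. intros HS P XX YY HUX HUY Href Hn HY. exact (Hn (HS P XX YY HUX HUY Href HY)). Qed.

Lemma antitone_dual S : monotone S -> antitone (fun XX => S (dual XX)).
Proof.
  intros HS P XX YY HUX HUY Href.
  apply (HS P); auto using uniform_dual, dual_antitone.
Qed.

Lemma monotone_dual S : antitone S -> monotone (fun XX => S (dual XX)).
Proof.
  intros HS P XX YY HUX HUY Href.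
  apply (HS P); auto using uniform_dual, dual_antitone.
Qed.

Lemma antitone_ext s p S : antitone S -> antitone (fun XX => S (ext_sigma s XX p)).
Proof.
  intros HS P XX YY HUX HUY Href.
  apply (HS _ _ _ (uniform_ext_sigma (s := s) (p := p) HUX)
                  (uniform_ext_sigma (s := s) (p := p) HUY)).
  exact (ext_sigma_refines HUX HUY Href).
Qed.

Lemma monotone_ext s p S : monotone S -> monotone (fun XX => S (ext_sigma s XX p)).
Proof.
  intros HS P XX YY HUX HUY Href.
  apply (HS _ _ _ (uniform_ext_sigma (s := s) (p := p) HUX)
                  (uniform_ext_sigma (s := s) (p := p) HUY)).
  exact (ext_sigma_refines HUX HUY Href).
Qed.

Lemma antitone_some_all (good : asg AP -> Prop) :
  antitone (fun XX => exists X, XX X /\ forall chi, X chi -> good chi).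
Proof.
  intros P XX YY _ _ Href [Y [HY Hgood]].
  destruct (Href Y HY) as [X [HX Hsub]]. exists X; auto.
Qed.

Lemma monotone_all_some (good : asg AP -> Prop) :
  monotone (fun XX => forall X, XX X -> exists chi, X chi /\ good chi).
Proof.
  intros P XX YY _ _ Href Hall Y HY.
  destruct (Href Y HY) as [X [HX Hsub]].
  destruct (Hall X HX) as [chi [Hchi Hg]]. exists chi; auto.
Qed.

Lemma antitone_conj SB SC : antitone SB -> antitone SC ->
  antitone (fun YY => forall YY1 YY2, par YY YY1 YY2 ->
              (nonempty YY1 /\ SB YY1) \/ (nonempty YY2 /\ SC YY2)).
Proof.
  intros HB HC P XX YY HUX HUY Href Hconj XX1 XX2 Hp.
  destruct (par_refines Href Hp) as [YY1 [YY2 [Hq [Href1 Href2]]]].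
  destruct (uniform_par HUX Hp) as [HUX1 HUX2].
  destruct (uniform_par HUY Hq) as [HUY1 HUY2].
  destruct (Hconj _ _ Hq) as [[Hne HS]|[Hne HS]].
  - left. split; [exact (refines_nonempty Href1 Hne)|exact (HB P _ _ HUX1 HUY1 Href1 HS)].
  - right. split; [exact (refines_nonempty Href2 Hne)|exact (HC P _ _ HUX2 HUY2 Href2 HS)].
Qed.

Lemma monotone_disj SB SC : monotone SB -> monotone SC ->
  monotone (fun XX => exists XX1 XX2, par XX XX1 XX2 /\
              (nonempty XX1 -> SB XX1) /\ (nonempty XX2 -> SC XX2)).
Proof.
  intros HB HC P XX YY HUX HUY Href [XX1 [XX2 [Hp [HS1 HS2]]]].
  destruct (par_refines Href Hp) as [YY1 [YY2 [Hq [Href1 Href2]]]].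
  destruct (uniform_par HUX Hp) as [HUX1 HUX2].
  destruct (uniform_par HUY Hq) as [HUY1 HUY2].
  exists YY1, YY2. split; [exact Hq|split].
  - intro Hne. apply (HB P XX1); auto. apply HS1, (refines_nonempty Href1 Hne).
  - intro Hne. apply (HC P XX2); auto. apply HS2, (refines_nonempty Href2 Hne).
Qed.

Lemma sem_monotone (phi : gfg AP) : antitone (sem phi EA) /\ monotone (sem phi AE).
Proof.
  induction phi as [l|b IH|b IHb c IHc|b IHb c IHc|p s b IH|p s b IH].
  - split; [apply antitone_some_all|apply monotone_all_some].
  - split; [apply antitone_not, IH|apply monotone_not, IH].
  - pose proof (antitone_conj (proj1 IHb) (proj1 IHc)) as Hconj.
    split; [exact Hconj|exact (monotone_dual Hconj)].
  - pose proof (monotone_disj (proj2 IHb) (proj2 IHc)) as Hdisj.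
    split; [exact (antitone_dual Hdisj)|exact Hdisj].
  - pose proof (antitone_ext (s := s) (p := p) (proj1 IH)) as Hext.
    split; [exact Hext|exact (monotone_dual Hext)].
  - pose proof (monotone_ext (s := s) (p := p) (proj2 IH)) as Hext.
    split; [exact (antitone_dual Hext)|exact Hext].
Qed.

Lemma sem_refines_iff (phi : gfg AP) P XX YY a : uniform P XX -> uniform P YY ->
  refines XX YY -> refines YY XX -> (sem phi a XX <-> sem phi a YY).
Proof.
  intros HUX HUY Hxy Hyx. destruct (sem_monotone phi) as [Hanti Hmono].
  destruct a; split; eauto.
Qed.

Lemma sem_dual_dual (phi : gfg AP) P XX a : uniform P XX ->
  (sem phi a XX <-> sem phi a (dual (dual XX))).
Proof.
  intro HU. apply (sem_refines_iff phi a HU);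
    auto using uniform_dual, dual_dual_refines, refines_dual_dual.
Qed.

Lemma some_all_dual (good : asg AP -> Prop) XX :
  (exists X, XX X /\ forall chi, X chi -> good chi) <->
  (forall Y, dual XX Y -> exists chi, Y chi /\ good chi).
Proof.
  split.
  - intros [X [HX Hgood]] Y [c [Hc HY]]. exists (c X).
    split; [apply HY; exists X; auto|apply Hgood, Hc, HX].
  - intros Hall. apply NNPP; intro Hnone.
    assert (Hbad : forall X, XX X -> exists chi, X chi /\ ~ good chi).
    { intros X HX. apply NNPP; intro Hb. apply Hnone. exists X. split; auto.
      intros chi Hchi. apply NNPP; intro Hng. apply Hb. exists chi; auto. }
    destruct (choose_witnesses no_asg (fun (X : aset AP) chi => X chi /\ ~ good chi))
      as [c Hc].
    destruct (Hall (fun chi => exists X, XX X /\ c X = chi)) as [chi [[X [HX <-]] Hg]].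
    + exists c. split; [intros X HX; apply (Hc X (Hbad X HX))|tauto].
    + exact (proj2 (Hc X (Hbad X HX)) Hg).
Qed.

Lemma all_some_dual (good : asg AP -> Prop) XX :
  (forall X, XX X -> exists chi, X chi /\ good chi) <->
  (exists Y, dual XX Y /\ forall chi, Y chi -> good chi).
Proof.
  split.
  - intros Hall.
    destruct (choose_witnesses no_asg (fun (X : aset AP) chi => X chi /\ good chi))
      as [c Hc].
    exists (fun chi => exists X, XX X /\ c X = chi). split.
    + exists c. split; [intros X HX; apply (Hc X (Hall X HX))|tauto].
    + intros chi [X [HX <-]]. apply (Hc X (Hall X HX)).
  - intros [Y [[c [Hc HY]] Hgood]] X HX. exists (c X).
    split; [apply Hc, HX|apply Hgood, HY; exists X; auto].
Qed.

Theorem sem_duality (phi : gfg AP) : forall P XX, uniform P XX ->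
  (sem phi EA XX <-> sem phi AE (dual XX)) /\ (sem phi AE XX <-> sem phi EA (dual XX)).
Proof.
  induction phi as [l|b IH|b IHb c IHc|b IHb c IHc|p s b IH|p s b IH]; intros P XX HU.
  - split; [apply some_all_dual|apply all_some_dual].
  - simpl. destruct (IH P XX HU). tauto.
  - split; [apply (sem_dual_dual (GAnd b c) EA HU)|reflexivity].
  - split; [reflexivity|apply (sem_dual_dual (GOr b c) AE HU)].
  - split; [apply (sem_dual_dual (GEx p s b) EA HU)|reflexivity].
  - split; [reflexivity|apply (sem_dual_dual (GAll p s b) AE HU)].
Qed.

Corollary sem_dual_eq (phi : gfg AP) P XX : uniform P XX ->
  sem phi EA (dual XX) = sem phi AE XX /\ sem phi AE (dual XX) = sem phi EA XX.
Proof.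
  intro HU. destruct (sem_duality phi HU) as [H1 H2].
  split; apply propositional_extensionality; tauto.
Qed.

Lemma isHAsg_dual Q XX : isHAsg Q XX -> isHAsg Q (dual XX).
Proof.
  intros [[X0 HX0] [Hne HU]].
  destruct (choose_witnesses no_asg (fun (X : aset AP) chi => X chi)) as [c Hc].
  split; [|split].
  - exists (fun chi => exists X, XX X /\ c X = chi), c.
    split; [intros X HX; apply (Hc X (Hne X HX))|tauto].
  - intros Y [d [Hd HY]]. exists (d X0). apply HY. exists X0; auto.
  - exact (uniform_dual HU).
Qed.

Lemma isHAsg_sup_dual Q XX : isHAsg_sup Q XX -> isHAsg_sup Q (dual XX).
Proof. intros [R [HQR HR]]. exists R. split; [exact HQR|exact (isHAsg_dual HR)]. Qed.

Lemma isHAsg_sup_uniform Q XX : isHAsg_sup Q XX -> exists R, uniform R XX.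
Proof. intros [R [_ [_ [_ HU]]]]. exists R. exact HU. Qed.

Section Transfer.
Variable C : hset AP -> Prop.
Hypothesis C_dual : forall XX, C XX -> C (dual XX).
Hypothesis C_uniform : forall XX, C XX -> exists P, uniform P XX.

Lemma exists_flag_swap (phi : gfg AP) :
  (exists XX, C XX /\ sem phi EA XX) <-> (exists XX, C XX /\ sem phi AE XX).
Proof.
  split; intros [XX [HC Hsem]]; exists (dual XX); split; auto;
    destruct (C_uniform HC) as [P HU]; destruct (sem_dual_eq phi HU) as [HEA HAE];
    rewrite ?HEA, ?HAE; exact Hsem.
Qed.

Lemma forall_flag_swap (op : Prop -> Prop -> Prop) (phi psi : gfg AP) :
  (forall XX, C XX -> op (sem phi EA XX) (sem psi EA XX)) <->
  (forall XX, C XX -> op (sem phi AE XX) (sem psi AE XX)).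
Proof.
  split; intros Hall XX HC; destruct (C_uniform HC) as [P HU];
    destruct (sem_dual_eq phi HU) as [Hphi1 Hphi2];
    destruct (sem_dual_eq psi HU) as [Hpsi1 Hpsi2];
    [rewrite <- Hphi1, <- Hpsi1|rewrite <- Hphi2, <- Hpsi2]; auto.
Qed.

End Transfer.

End Duality.

Theorem mainTheorem10 (AP : Type) (phi psi : gfg AP) :
  (satisfiable EA phi <-> satisfiable AE phi) /\
  (implies EA phi psi <-> implies AE phi psi) /\
  (equivalent EA phi psi <-> equivalent AE phi psi).
Proof.
  pose proof (@isHAsg_dual AP (free phi)) as Hsat_dual.
  assert (Hsat_uniform : forall XX, isHAsg (free phi) XX -> exists P, uniform P XX).
  { intros XX [_ [_ HU]]. exists (free phi). exact HU. }
  pose proof (@isHAsg_sup_dual AP (free phi)) as Hsup_dual.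
  pose proof (@isHAsg_sup_uniform AP (free phi)) as Hsup_uniform.
  split; [|split].
  - exact (exists_flag_swap Hsat_dual Hsat_uniform phi).
  - unfold implies. rewrite (forall_flag_swap Hsup_dual Hsup_uniform (fun A B => A -> B)).
    reflexivity.
  - unfold equivalent. rewrite (forall_flag_swap Hsup_dual Hsup_uniform iff).
    reflexivity.
Qed.
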